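(* Let $C$ be an almost-clique with $|C|=\Delta+k$ for some $k>0$, and let $t$ denote the total number of edges with one endpoint in $C$ and the other endpoint outside $C$. Then $|\mathcal{M}_N|\ge\frac{k-1}{100\varepsilon}+\frac{t}{100\varepsilon\Delta}$.
   Context: $G=(V,E)$ is a graph with maximum degree at most $\Delta$, and $0<\varepsilon<1$. $C\subseteq V$ is a vertex set (almost-clique); $\overline{E(C)}$ denotes the set of non-edges of $C$, i.e. unordered pairs of distinct vertices of $C$ not joined by an edge. $\mathcal{M}_N$ is the non-edge matching maintained by the algorithm for $C$: a matching in the graph $(C,\overline{E(C)})$ which is guaranteed to satisfy $|\mathcal{M}_N|\ge\frac{|\overline{E(C)}|}{50\varepsilon\Delta}$. *)

From HB Require Import structures.
From mathcomp Require Import all_boot all_order all_algebra.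
Set Implicit Arguments. Unset Strict Implicit. Unset Printing Implicit Defensive.

Definition simple_graph (T : finType) (e : rel T) : Prop :=
  symmetric e /\ irreflexive e.

Definition nbhd (T : finType) (e : rel T) (v : T) : {set T} := [set u | e v u].
Definition max_deg_le (T : finType) (e : rel T) (D : nat) : Prop :=
  forall v : T, #|nbhd e v| <= D.

Definition nonedges (T : finType) (e : rel T) (C : {set T}) : {set {set T}} :=
  [set [set x; y] | x in C, y in C & (x != y) && ~~ e x y].

Definition nonedge_matching (T : finType) (e : rel T) (C : {set T})
    (M : {set {set T}}) : Prop :=
  M \subset nonedges e C /\ trivIset M.

(* Number of edges with exactly one endpoint in C (counted as ordered pairs (inside, outside),
   which is a bijection with the unordered cut edges). *)
Definition cut_edges (T : finType) (e : rel T) (C : {set T}) : nat :=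
  #|[set p : T * T | (p.1 \in C) && (p.2 \notin C) && e p.1 p.2]|.

From mathcomp Require Import all_boot all_order all_algebra zify ring.
Import Order.TTheory GRing.Theory Num.Theory.

(* Every x in C has |C| - 1 partners in C, of which at most Delta - out(x) are
   neighbours, out(x) being the number of neighbours of x outside C. Hence x has
   at least |C| - 1 - Delta + out(x) = k - 1 + out(x) non-neighbours in C.
   Summing over C counts every non-edge twice, so
   2 |nonedges C| >= Delta (k - 1) + t, and the assumed bound on the matching
   turns this into the claimed lower bound on |M|. *)

Lemma card_pairs_sum (T : finType) (A : {set T}) (X : {set T * T}) :
  (forall p, p \in X -> p.1 \in A) ->
  #|X| = \sum_(x in A) #|[set y | (x, y) \in X]|.
Proof.
move=> XA; rewrite -sum1_card.
under [RHS]eq_bigr => x _ do rewrite -sum1_card.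
rewrite pair_big_dep /=; apply: eq_bigl => -[x y] /=.
by rewrite inE andb_idl // => /XA.
Qed.

Section NonEdgeCounting.

Set Implicit Arguments.

Variables (T : finType) (e : rel T) (C : {set T}).

Definition nonedge_pairs : {set T * T} :=
  [set p | [&& p.1 \in C, p.2 \in C, p.1 != p.2 & ~~ e p.1 p.2]].

Definition nonnbhd_in (x : T) : {set T} := [set y in C | (x != y) && ~~ e x y].

(* Each non-edge {a, b} has the two orientations (a, b) and (b, a); the
   orientation is recorded by comparing the ranks of the endpoints. *)
Lemma card_nonedge_pairs_le : #|nonedge_pairs| <= 2 * #|nonedges e C|.
Proof.
pose f (p : T * T) := ([set p.1; p.2], enum_rank p.1 < enum_rank p.2).
have f_inj : {in nonedge_pairs &, injective f}.
  move=> [a b] [c d]; rewrite !inE /= => /and4P[_ _ ab _] /and4P[_ _ cd _].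
  case=> eq_ab_cd lt_ab_cd.
  have : c \in [set a; b] by rewrite eq_ab_cd set21.
  have : d \in [set a; b] by rewrite eq_ab_cd set22.
  rewrite !inE => /orP[]/eqP dE /orP[]/eqP cE; subst c d; rewrite ?eqxx // in cd *.
  move: lt_ab_cd; case: (ltngtP (enum_rank a) (enum_rank b)) => // /ord_inj.
  by move/enum_rank_inj=> eq_ab; rewrite eq_ab eqxx in ab.
rewrite -(card_in_imset f_inj) mulnC -[2]card_bool -cardsT -cardsX.
apply/subset_leq_card/subsetP => _ /imsetP[[a b] + ->].
rewrite !inE /= => /and4P[aC bC ab nab]; rewrite andbT.
by apply/imset2P; exists a b; rewrite // inE bC ab.
Qed.

Lemma card_nonedge_pairs : #|nonedge_pairs| = \sum_(x in C) #|nonnbhd_in x|.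
Proof.
rewrite (@card_pairs_sum _ C) => [|p]; last by rewrite inE => /and4P[].
by apply: eq_bigr => x xC; apply: eq_card => y; rewrite !inE xC.
Qed.

Lemma cut_edges_sum : cut_edges e C = \sum_(x in C) #|nbhd e x :\: C|.
Proof.
rewrite /cut_edges (@card_pairs_sum _ C) => [|p]; last by rewrite inE => /andP[/andP[]].
by apply: eq_bigr => x xC; apply: eq_card => y; rewrite !inE xC.
Qed.

Lemma card_nonnbhd_in_ge x : x \in C ->
  #|C| + #|nbhd e x :\: C| <= #|nonnbhd_in x| + #|nbhd e x| + 1.
Proof.
move=> xC.
have C_x : #|C| = (#|C :\ x| + 1)%N by rewrite (cardsD1 x C) xC addnC.
have C_x_le : #|C :\ x| <= #|nonnbhd_in x| + #|nbhd e x :&: C|.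
  apply: leq_trans (leq_card_setU _ _); apply/subset_leq_card/subsetP => y.
  rewrite !inE => /andP[yx yC]; case: (e x y); first by rewrite yC orbT.
  by rewrite yC eq_sym yx.
have := cardsID C (nbhd e x); lia.
Qed.

Lemma card_nonedges_ge D : max_deg_le e D ->
  #|C| * #|C| + cut_edges e C <= 2 * #|nonedges e C| + #|C| * D.+1.
Proof.
move=> degD; apply: leq_trans (leq_add card_nonedge_pairs_le (leqnn _)).
rewrite card_nonedge_pairs cut_edges_sum -!sum_nat_const -!big_split /=.
apply: leq_sum => x xC.
have := card_nonnbhd_in_ge xC; have := degD x; lia.
Qed.

End NonEdgeCounting.

Local Open Scope ring_scope.

Theorem lemma16 (R : realFieldType) (T : finType) (e : rel T) (Delta : nat)
    (eps : R) (C : {set T}) (M : {set {set T}}) (k : nat) :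
  simple_graph e ->
  max_deg_le e Delta ->
  (0 < Delta)%N ->
  0 < eps -> eps < 1 ->
  nonedge_matching e C M ->
  (#|nonedges e C|%:R / (50 * eps * Delta%:R) <= #|M|%:R) ->
  (0 < k)%N ->
  #|C| = (Delta + k)%N ->
  (k%:R - 1) / (100 * eps) + (cut_edges e C)%:R / (100 * eps * Delta%:R)
    <= #|M|%:R.
Proof.
move=> _ degD Delta_gt0 eps_gt0 _ _ M_ge k_gt0 card_C.
have count : (Delta * (k - 1) + cut_edges e C <= 2 * #|nonedges e C|)%N.
  by have := card_nonedges_ge C degD; rewrite card_C; nia.
move: count; rewrite -(ler_nat R) natrD !natrM natrB // => count.
apply: le_trans M_ge.
have Delta_neq0 : Delta%:R != 0 :> R by rewrite pnatr_eq0 -lt0n.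
have eps_neq0 : eps != 0 by rewrite gt_eqF.
have -> : (k%:R - 1) / (100 * eps) + (cut_edges e C)%:R / (100 * eps * Delta%:R)
   = (Delta%:R * (k%:R - 1) + (cut_edges e C)%:R) / (100 * eps * Delta%:R).
  by field; apply/andP.
have -> : #|nonedges e C|%:R / (50 * eps * Delta%:R)
   = 2 * #|nonedges e C|%:R / (100 * eps * Delta%:R).
  by field; apply/andP.
by rewrite ler_pM2r // invr_gt0 !mulr_gt0 ?ltr0n.
Qed.
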